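(* Let $\xi=(\omega,\gamma,\mu,c)$ be a normalized quasi-abelian 3-cocycle on a finite crossed module $(G,X,\partial)$. The braided fusion category $\mathcal{C}(\xi)^G$ is nondegenerate if and only if the homomorphism $\partial$ is surjective and $\xi$ is nondegenerate.
   Context: $\mathbb{K}$ is an algebraically closed field of characteristic $0$. A finite crossed module is a triple $(G,X,\partial)$ with $G,X$ finite groups, $G$ acting on $X$ by automorphisms $(g,x)\mapsto {}^{g}x$, and $\partial:X\to G$ a homomorphism with ${}^{\partial(x)}x'=xx'x^{-1}$ and $\partial({}^gx)=g\partial(x)g^{-1}$. A quasi-abelian 3-cocycle on it is a quadruple $\xi=(\omega,\gamma,\mu,c)$ of functions $\omega:X^3\to\mathbb{K}^\times$, $(g,h,x)\mapsto\gamma_{g,h}(x)$ on $G\times G\times X$, $(g,x,y)\mapsto\mu_g(x,y)$ on $G\times X\times X$, $c:X^2\to\mathbb{K}^\times$, such that for all $g,h,k\in G$, $w,x,y,z\in X$: (a) $\omega(x,y,z)\omega(w,xy,z)\omega(w,x,y)=\omega(w,x,yz)\omega(wx,y,z)$; (b) $\gamma_{h,k}(x)\gamma_{g,hk}(x)=\gamma_{gh,k}(x)\gamma_{g,h}({}^kx)$; (c) $\frac{\mu_g(y,z)\mu_g(x,yz)}{\mu_g(xy,z)\mu_g(x,y)}=\frac{\omega({}^gx,{}^gy,{}^gz)}{\omega(x,y,z)}$; (d) $\frac{\gamma_{g,h}(x)\gamma_{g,h}(y)}{\gamma_{g,h}(xy)}=\frac{\mu_g({}^hx,{}^hy)\mu_h(x,y)}{\mu_{gh}(x,y)}$;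 (e) $\frac{c({}^gx,{}^gy)}{c(x,y)}=\frac{\mu_g(xyx^{-1},x)}{\mu_g(x,y)}\cdot\frac{\gamma_{g\partial(x)g^{-1},g}(y)}{\gamma_{g,\partial(x)}(y)}$; (f) $c(xy,z)=\frac{\omega(x,y,z)\,\omega((xy)z(xy)^{-1},x,y)}{\omega(x,yzy^{-1},y)\,\gamma_{\partial(x),\partial(y)}(z)}\,c(x,yzy^{-1})\,c(y,z)$; (g) $c(x,yz)=\frac{\omega(xyx^{-1},x,z)}{\omega(x,y,z)\,\omega(xyx^{-1},xzx^{-1},x)\,\mu_{\partial(x)}(y,z)}\,c(x,y)\,c(x,z)$. It is normalized if $\omega(x,y,z)=1$ whenever one of $x,y,z$ is $e$, $\gamma_{g,h}(x)=1$ whenever one of $g,h,x$ is $e$, $\mu_g(x,y)=1$ whenever one of $g,x,y$ is $e$, and $c(x,y)=1$ whenever $x$ or $y$ is $e$. A normalized $\xi$ is nondegenerate if the symmetric bicharacter $\mathrm{Ker}\,\partial\times\mathrm{Ker}\,\partial\to\mathbb{K}^\times$, $(x,y)\mapsto c(y,x)c(x,y)$, on the abelian group $\mathrm{Ker}\,\partial$ is nondegenerate. $\mathcal{C}(\xi)$ denotes the fusion category $\mathrm{Vec}_X^\omega$ of finite-dimensional $X$-graded vector spaces (tensor product $\otimes_\mathbb{K}$ with degrees multiplied, associativity $(u\otimes v)\otimes w\mapsto\omega(x,y,z)u\otimes(v\otimes w)$ for homogeneous $u,v,w$ of degrees $x,y,z$) with: the $G$-grading with $\mathcal{C}_g$ the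 objects supported on $\partial^{-1}(g)$; functors $T_g$ sending homogeneous $V$ of degree $x$ to the same space in degree ${}^gx$; and for homogeneous $V,W$ of degrees $x,y$ the isomorphisms $\tilde\gamma_{g,h}(V)=\gamma_{g,h}(x)\mathrm{id}_V:T_{gh}(V)\to T_gT_h(V)$, $\tilde\mu_g(V,W)=\mu_g(x,y)\mathrm{id}:T_g(V\otimes W)\to T_gV\otimes T_gW$, $\tilde c(V,W)=c(x,y)\tau_{V,W}:V\otimes W\to T_{\partial(x)}(W)\otimes V$ ($\tau$ the flip). The equivariantization $\mathcal{C}(\xi)^G$ is the braided fusion category of pairs $(V,\{u_g\})$, $u_g:T_g(V)\to V$ isomorphisms with $u_{gh}=u_g\circ T_g(u_h)\circ\tilde\gamma_{g,h}(V)$; morphisms commute with the $u_g$; tensor product $(V\otimes V',\{(u_g\otimes u'_g)\circ\tilde\mu_g(V,V')\})$; associativity from $\mathrm{Vec}_X^\omega$; braiding given on $V_g\otimes V'$ ($V_g$ the component of $V$ in $\mathcal{C}_g$) by $(u'_g\otimes\mathrm{id})\circ\tilde c(V_g,V')$. A braided fusion category is nondegenerate if the only objects $Y$ with $c_{Y,Z}\circ c_{Z,Y}=\mathrm{id}$ and $c_{Z,Y}\circ c_{Y,Z}=\mathrm{id}$ for all objects $Z$ are direct sums of the unit object. *)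

From HB Require Import structures.
From mathcomp Require Import all_boot all_order all_algebra all_fingroup.
Set Implicit Arguments. Unset Strict Implicit. Unset Printing Implicit Defensive.
Import GRing.Theory.
Local Open Scope ring_scope.

Record crossed_module (G X : finGroupType) := CrossedModule {
  cm_act : G -> X -> X;
  cm_d   : X -> G
}.

Definition is_crossed_module (G X : finGroupType) (M : crossed_module G X) : Prop :=
  let act := cm_act M in let d := cm_d M in
  (forall x, act 1%g x = x) /\
  (forall g h x, act (g * h)%g x = act g (act h x)) /\
  (forall g x y, act g (x * y)%g = (act g x * act g y)%g) /\
  (forall x y, d (x * y)%g = (d x * d y)%g) /\
  (forall x x', act (d x) x' = (x * x' * x^-1)%g) /\
  (forall g x, d (act g x) = (g * d x * g^-1)%g).

Record qa_data (K : fieldType) (G X : finGroupType) := QAData {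
  qa_om  : X -> X -> X -> K;
  qa_gam : G -> G -> X -> K;
  qa_mu  : G -> X -> X -> K;
  qa_c   : X -> X -> K
}.

Definition is_qa_cocycle (K : fieldType) (G X : finGroupType)
    (M : crossed_module G X) (xi : qa_data K G X) : Prop :=
  let act := cm_act M in let d := cm_d M in
  let om := qa_om xi in let gam := qa_gam xi in
  let mu := qa_mu xi in let c := qa_c xi in
  (
      (forall x y z, om x y z != 0) /\ (forall g h x, gam g h x != 0) /\
      (forall g x y, mu g x y != 0) /\ (forall x y, c x y != 0)) /\
      (forall w x y z,
         om x y z * om w (x * y)%g z * om w x y = om w x (y * z)%g * om (w * x)%g y z) /\
      (forall g h k x,
         gam h k x * gam g (h * k)%g x = gam (g * h)%g k x * gam g h (act k x)) /\
      (forall g x y z,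
         (mu g y z * mu g x (y * z)%g) / (mu g (x * y)%g z * mu g x y)
         = om (act g x) (act g y) (act g z) / om x y z) /\
      (forall g h x y,
         (gam g h x * gam g h y) / gam g h (x * y)%g
         = (mu g (act h x) (act h y) * mu h x y) / mu (g * h)%g x y) /\
      (forall g x y,
         c (act g x) (act g y) / c x y
         = mu g (x * y * x^-1)%g x / mu g x y
           * (gam (g * d x * g^-1)%g g y / gam g (d x) y)) /\
      (forall x y z,
         c (x * y)%g z
         = (om x y z * om ((x * y) * z * (x * y)^-1)%g x y)
             / (om x (y * z * y^-1)%g y * gam (d x) (d y) z)
           * c x (y * z * y^-1)%g * c y z) /\
      (forall x y z,
         c x (y * z)%g
         = om (x * y * x^-1)%g x z
             / (om x y z * om (x * y * x^-1)%g (x * z * x^-1)%g x * mu (d x) y z)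
           * c x y * c x z).

Definition qa_normalized (K : fieldType) (G X : finGroupType) (xi : qa_data K G X) : Prop :=
  let om := qa_om xi in let gam := qa_gam xi in
  let mu := qa_mu xi in let c := qa_c xi in
  [/\ (forall x y z, x = 1%g \/ y = 1%g \/ z = 1%g -> om x y z = 1),
      (forall g h x, g = 1%g \/ h = 1%g \/ x = 1%g -> gam g h x = 1),
      (forall g x y, g = 1%g \/ x = 1%g \/ y = 1%g -> mu g x y = 1)
    & (forall x y, x = 1%g \/ y = 1%g -> c x y = 1)].

(* nondegeneracy of the bicharacter (x,y) |-> c(y,x) c(x,y) on Ker d:
   its radical is trivial *)
Definition qa_nondegenerate (K : fieldType) (G X : finGroupType)
    (M : crossed_module G X) (xi : qa_data K G X) : Prop :=
  forall x, cm_d M x = 1%g ->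
    (forall y, cm_d M y = 1%g -> qa_c xi y x * qa_c xi x y = 1) -> x = 1%g.

Definition cm_surjective (G X : finGroupType) (M : crossed_module G X) : Prop :=
  forall g : G, exists x : X, cm_d M x = g.

(* ---------- linear maps between spaces with finite bases ----------
   f : lmap I J  represents the linear map K^I -> K^J sending the basis
   vector e_i to \sum_j f i j e_j.  [lcomp f g] is "first f, then g". *)
Definition lmap (K : fieldType) (I J : finType) := I -> J -> K.
Definition lcomp (K : fieldType) (I J L : finType) (f : lmap K I J) (g : lmap K J L)
  : lmap K I L := fun i l => \sum_(j : J) f i j * g j l.
Definition lid (K : fieldType) (I : finType) : lmap K I I := fun i j => (i == j)%:R.
Arguments lid {K I} _ _.

(* ---------- the equivariantization C(xi)^G, concretely ----------
   An object is an X-graded space given with a homogeneous basis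
   e_0..e_{n-1} (e_i of degree obdeg i), together with the matrices of
   the isomorphisms u_g : T_g(V) -> V. *)
Record eqobj (K : fieldType) (G X : finGroupType) := EqObj {
  obdim : nat;
  obdeg : 'I_obdim -> X;
  obU   : G -> lmap K 'I_obdim 'I_obdim
}.
Arguments obdeg {K G X} e _.
Arguments obU {K G X} e _ _ _.

Definition valid_obj (K : fieldType) (G X : finGroupType)
    (M : crossed_module G X) (xi : qa_data K G X) (V : eqobj K G X) : Prop :=
  [/\ (* u_g is a morphism of X-graded spaces T_g(V) -> V *)
      (forall g i j, obU V g i j != 0 -> obdeg V j = cm_act M g (obdeg V i)),
      (forall g, exists W : lmap K 'I_(obdim V) 'I_(obdim V),
         lcomp (obU V g) W = lid /\ lcomp W (obU V g) = lid)
    & (* u_{gh} = u_g o T_g(u_h) o gamma~_{g,h}(V) *)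
      (forall g h i k,
         obU V (g * h)%g i k
         = qa_gam xi g h (obdeg V i) * \sum_j obU V h i j * obU V g j k)].

Definition is_mor (K : fieldType) (G X : finGroupType)
    (V W : eqobj K G X) (F : lmap K 'I_(obdim V) 'I_(obdim W)) : Prop :=
  (forall i j, F i j != 0 -> obdeg W j = obdeg V i) /\
  (forall g, lcomp (obU V g) F = lcomp F (obU W g)).
Arguments is_mor {K G X} V W F.

(* braiding c_{V,W} : V (x) W -> W (x) V, with basis e_i (x) f_j :
   e_i (x) f_j |-> c(deg e_i, deg f_j) . u^W_{d(deg e_i)}(f_j) (x) e_i *)
Definition braid (K : fieldType) (G X : finGroupType)
    (M : crossed_module G X) (xi : qa_data K G X) (V W : eqobj K G X)
  : lmap K ('I_(obdim V) * 'I_(obdim W))%type ('I_(obdim W) * 'I_(obdim V))%type :=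
  fun p q => (q.2 == p.1)%:R * qa_c xi (obdeg V p.1) (obdeg W p.2)
             * obU W (cm_d M (obdeg V p.1)) p.2 q.1.
Arguments braid {K G X} M xi V W _ _.

Definition unit_sum (K : fieldType) (G X : finGroupType) (n : nat) : eqobj K G X :=
  @EqObj K G X n (fun _ => 1%g) (fun _ => lid).

Definition is_sum_of_units (K : fieldType) (G X : finGroupType) (Y : eqobj K G X) : Prop :=
  exists n (F : lmap K 'I_(obdim Y) 'I_n) (H : lmap K 'I_n 'I_(obdim Y)),
    [/\ is_mor Y (unit_sum K G X n) F, is_mor (unit_sum K G X n) Y H,
        lcomp F H = lid & lcomp H F = lid].

Definition transparent (K : fieldType) (G X : finGroupType)
    (M : crossed_module G X) (xi : qa_data K G X) (Y : eqobj K G X) : Prop :=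
  forall Z, valid_obj M xi Z ->
    lcomp (braid M xi Y Z) (braid M xi Z Y) = lid /\
    lcomp (braid M xi Z Y) (braid M xi Y Z) = lid.

Definition equivariantization_nondegenerate (K : fieldType) (G X : finGroupType)
    (M : crossed_module G X) (xi : qa_data K G X) : Prop :=
  forall Y, valid_obj M xi Y -> transparent M xi Y -> is_sum_of_units Y.

(* Both directions are detected by test objects.  If the image H of d is a
   proper subgroup, the permutation object on the cosets G/H, all in degree 1,
   is transparent (H acts trivially on it) but not a sum of units.  If d is
   onto and x <> 1 lies in the radical of c on Ker d, then the inverse of
   y |-> c(x,y) c(y,x) descends along d to a gamma(x)-twisted character of G,
   and x equipped with it is a transparent object that is not a unit.
   Conversely, braiding a transparent Y with the induced objects Ind(y)
   (basis indexed by G, e_h in degree ^h y) and reading off the component of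
   e_1 forces every degree x of Y into Ker d and u_(d y) = (c(x,y) c(y,x))^-1
   on that component; nondegeneracy of c makes x = 1, and then surjectivity of
   d makes every u_g trivial. *)
From mathcomp Require Import all_boot all_order all_algebra all_fingroup.
From mathcomp Require Import ring.
From Stdlib Require Import FunctionalExtensionality.
Set Implicit Arguments. Unset Strict Implicit. Unset Printing Implicit Defensive.
Import GRing.Theory.
Local Open Scope ring_scope.

Section LinearMaps.
Variable K : fieldType.

Lemma sum_supp1 (T : finType) (a : T) (F : T -> K) :
  (forall t, t != a -> F t = 0) -> \sum_t F t = F a.
Proof. by move=> F0; rewrite (bigD1 a) //= big1 ?addr0 // => t /F0. Qed.

Lemma sum_enum_supp1 (T : finType) (a : T) (F : 'I_#|T| -> K) :
  (forall j, enum_val j != a -> F j = 0) -> \sum_j F j = F (enum_rank a).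
Proof.
move=> F0; apply: sum_supp1 => j ja; apply: F0.
by apply: contra_neq ja => <-; rewrite enum_valK.
Qed.

Lemma lmap_ext (I J : finType) (f g : lmap K I J) : (forall i j, f i j = g i j) -> f = g.
Proof. by move=> fg; do 2![apply: functional_extensionality => ?]; apply: fg. Qed.

Lemma lcompA (I J L N : finType) (f : lmap K I J) (g : lmap K J L) (h : lmap K L N) :
  lcomp (lcomp f g) h = lcomp f (lcomp g h).
Proof.
apply: lmap_ext => i n; rewrite /lcomp.
under eq_bigr do rewrite mulr_suml.
rewrite exchange_big /=; apply: eq_bigr => j _; rewrite mulr_sumr.
by apply: eq_bigr => l _; rewrite mulrA.
Qed.

Lemma lcomp_lid (I J : finType) (f : lmap K I J) : lcomp f lid = f.
Proof.
apply: lmap_ext => i j; rewrite /lcomp (@sum_supp1 _ j) /lid ?eqxx ?mulr1 //.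
by move=> l /negbTE->; rewrite mulr0.
Qed.

Lemma lid_pair (I J : finType) (p q : (I * J)%type) :
  (lid p q : K) = (p.1 == q.1)%:R * (p.2 == q.2)%:R.
Proof. by rewrite /lid -natrM mulnb -xpair_eqE -!surjective_pairing. Qed.

Lemma lid_neq0 (I : finType) (i : I) : (lid i i : K) != 0.
Proof. by rewrite /lid eqxx oner_eq0. Qed.

Definition lswap (I J : finType) : lmap K (I * J)%type (J * I)%type :=
  fun p q => (q == (p.2, p.1))%:R.

Lemma lswapK (I J : finType) : lcomp (@lswap I J) (@lswap J I) = lid.
Proof.
apply: lmap_ext => p r; rewrite /lcomp (@sum_supp1 _ (p.2, p.1)).
  by rewrite /lswap eqxx mul1r /lid; case: p => a b; rewrite eq_sym.
by move=> q /negbTE Hq; rewrite /lswap Hq mul0r.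
Qed.

End LinearMaps.
Arguments lswap {K I J}.

Section CrossedModule.
Variables (G X : finGroupType) (M : crossed_module G X).
Hypothesis HM : is_crossed_module M.
Local Notation act := (cm_act M).
Local Notation d := (cm_d M).

Lemma cm_act1g x : act 1%g x = x.
Proof. by case: HM. Qed.

Lemma cm_actg1 g : act g 1%g = 1%g.
Proof.
case: HM => _ [_ [actM _]]; have := actM g 1%g 1%g; rewrite mulg1 => E.
by apply: (@mulgI _ (act g 1%g)); rewrite -E mulg1.
Qed.

Lemma cm_dM x y : d (x * y)%g = (d x * d y)%g.
Proof. by case: HM => _ [_ [_ []]]. Qed.

Lemma cm_d1 : d 1%g = 1%g.
Proof. by apply: (@mulgI _ (d 1%g)); rewrite -cm_dM !mulg1. Qed.

Lemma cm_dV x : d x^-1 = (d x)^-1%g.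
Proof. by apply: (@mulgI _ (d x)); rewrite -cm_dM !mulgV cm_d1. Qed.

Lemma cm_d_conj g x : (g^-1 * d x * g)%g = d (act g^-1 x).
Proof. by case: HM => _ [_ [_ [_ [_ dact]]]]; rewrite dact invgK. Qed.

Lemma cm_ker_central x y : d x = 1%g -> commute x y.
Proof.
move=> dx; case: HM => _ [_ [_ [_ [peiffer _]]]].
have := peiffer x y; rewrite dx cm_act1g => E.
by rewrite /commute {2}E -!mulgA mulVg mulg1.
Qed.

Lemma cm_act_d_ker x y : d x = 1%g -> act (d y) x = x.
Proof.
move=> dx; case: HM => _ [_ [_ [_ [peiffer _]]]].
by rewrite peiffer -(cm_ker_central y dx) mulgK.
Qed.

End CrossedModule.

Section CosetAction.
Variables (G X : finGroupType) (M : crossed_module G X).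
Hypothesis HM : is_crossed_module M.
Local Notation d := (cm_d M).

(* G acts on the subsets of G stable under right multiplication by Im d
   (their left translates are again stable), and trivially on the others;
   Im d acts trivially, so on stable sets this is the action on G / Im d. *)
Definition dstable (S : {set G}) : bool := [forall s in S, forall y, (s * d y)%g \in S].

Definition coset_act (g : G) (S : {set G}) : {set G} := if dstable S then (g *: S)%g else S.

Lemma dstable_lcoset g S : dstable S -> dstable (g *: S)%g.
Proof.
move=> /forall_inP stS; apply/forall_inP => s; rewrite mem_lcoset => Ss.
by apply/forallP => y; rewrite mem_lcoset mulgA; move/forallP: (stS _ Ss).
Qed.

Lemma coset_act1 S : coset_act 1%g S = S.
Proof. by rewrite /coset_act; case: ifP => // _; rewrite lcoset1. Qed.

Lemma coset_actM g h S : coset_act (g * h)%g S = coset_act g (coset_act h S).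
Proof.
rewrite /coset_act; case: ifP => stS; last by rewrite stS.
by rewrite dstable_lcoset // lcosetM.
Qed.

Lemma coset_act_d y S : coset_act (d y) S = S.
Proof.
rewrite /coset_act; case: ifP => // /forall_inP stS.
apply/eqP; rewrite eqEcard card_lcoset leqnn andbT; apply/subsetP => t.
rewrite mem_lcoset => /stS /forallP /(_ (cm_act M t^-1 y)).
by rewrite -cm_d_conj // !mulgA mulgK mulVg mul1g.
Qed.

Lemma coset_act_image g : (forall x, d x != g) -> coset_act g (d @: setT) != d @: setT.
Proof.
move=> notd; have stIm : dstable (d @: setT).
  apply/forall_inP => _ /imsetP [x _ ->]; apply/forallP => y.
  by rewrite -cm_dM // imset_f.
rewrite /coset_act stIm; apply: contraTneq isT => gIm.
have /imsetP [x _ dx] : g \in d @: setT.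
  by rewrite -gIm mem_lcoset mulVg -(cm_d1 HM) imset_f.
by have := notd x; rewrite dx eqxx.
Qed.

End CosetAction.

Section Equivariantization.
Variables (K : fieldType) (G X : finGroupType) (M : crossed_module G X) (xi : qa_data K G X).
Hypotheses (HM : is_crossed_module M) (Hxi : is_qa_cocycle M xi) (Hn : qa_normalized xi).
Local Notation act := (cm_act M).
Local Notation d := (cm_d M).
Local Notation gam := (qa_gam xi).
Local Notation qc := (qa_c xi).

Lemma qa_gam_neq0 g h x : gam g h x != 0.
Proof. by case: Hxi => [[_ []]]. Qed.

Lemma qa_c_neq0 x y : qc x y != 0.
Proof. by case: Hxi => [[_ [_ []]]]. Qed.

Lemma qa_gam_norm g h x : g = 1%g \/ h = 1%g \/ x = 1%g -> gam g h x = 1.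
Proof. by case: Hn => _ gam1 _ _; apply: gam1. Qed.

Lemma qa_c_norm x y : x = 1%g \/ y = 1%g -> qc x y = 1.
Proof. by case: Hn => _ _ _ c1; apply: c1. Qed.

Lemma valid_obj_u1 (V : eqobj K G X) : valid_obj M xi V -> obU V 1%g = lid.
Proof.
case=> _ uV_inv uVM; have [W [uW _]] := uV_inv 1%g.
have uV_idem : obU V 1%g = lcomp (obU V 1%g) (obU V 1%g).
  apply: lmap_ext => i k; rewrite -{1}(mulg1 1%g) uVM qa_gam_norm ?mul1r //.
  by left.
by rewrite -uW {2}uV_idem lcompA uW lcomp_lid.
Qed.

Lemma valid_obj_row (V : eqobj K G X) g i :
  valid_obj M xi V -> ~ (forall k, obU V g i k = 0).
Proof.
case=> _ uV_inv _ row0; have [W [uW _]] := uV_inv g.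
have := congr1 (fun f => f i i) uW; rewrite /lcomp big1 => [|k _].
  by move/eqP; rewrite eq_sym (negbTE (lid_neq0 _ _)).
by rewrite row0 mul0r.
Qed.

Lemma sum_of_unitsP (V : eqobj K G X) :
  is_sum_of_units V <-> (forall i, obdeg V i = 1%g) /\ (forall g, obU V g = lid).
Proof.
split=> [|[deg1 u1]]; last first.
  exists (obdim V), lid, lid.
  by split; rewrite ?lcomp_lid //; split=> [i j _ /=|g /=]; rewrite ?deg1 ?u1.
case=> n [F [H [[degF uF] _ FH _]]]; split=> [i|g].
  case: (pickP (fun j => F i j != 0)) => [j /degF <- // | F0].
  have := congr1 (fun f => f i i) FH; rewrite /lcomp big1 => [|j _].
    by move/eqP; rewrite eq_sym (negbTE (lid_neq0 _ _)).
  by move/negbFE/eqP: (F0 j) ->; rewrite mul0r.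
by rewrite -[LHS]lcomp_lid -FH -lcompA uF lcomp_lid.
Qed.

Definition ind_obj (y : X) : eqobj K G X :=
  @EqObj K G X #|G| (fun j => act (enum_val j) y)
    (fun g j k => (enum_val k == g * enum_val j)%g%:R / gam g (enum_val j) y).

Lemma ind_obj_valid y : valid_obj M xi (ind_obj y).
Proof.
have gam_cocycle g h x : gam h x y * gam g (h * x)%g y = gam (g * h)%g x y * gam g h (act x y).
  by case: Hxi => [_ [_ [gamC _]]]; apply: gamC.
have [_ [actM _]] := HM.
split=> /=.
- move=> g i j; have [-> _ | _] := eqVneq (enum_val j) (g * enum_val i)%g.
    by rewrite actM.
  by rewrite mul0r eqxx.
- move=> g; exists (fun k j => (enum_val j == g^-1 * enum_val k)%g%:R * gam g (enum_val j) y).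
  split; apply: lmap_ext => j l; rewrite /lcomp /lid.
  + rewrite (@sum_enum_supp1 _ _ (g * enum_val j)%g) => [|k /negbTE->]; last by rewrite !mul0r.
    rewrite enum_rankK eqxx mul1r mulKg (inj_eq enum_val_inj) (eq_sym j l).
    by case: eqP => [->|_]; rewrite ?mul1r ?mulVf ?qa_gam_neq0 // !mul0r mulr0.
  + rewrite (@sum_enum_supp1 _ _ (g^-1 * enum_val j)%g) => [|k /negbTE->]; last by rewrite !mul0r.
    rewrite enum_rankK eqxx mul1r mulKVg (inj_eq enum_val_inj) (eq_sym j l).
    by case: eqP => _; rewrite ?mul1r ?mulfV ?qa_gam_neq0 // !mul0r mulr0.
- move=> g h i k.
  rewrite (@sum_enum_supp1 _ _ (h * enum_val i)%g) => [|j /negbTE->]; last by rewrite !mul0r.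
  rewrite enum_rankK eqxx mulgA; case: (_ == _); last by rewrite !(mul0r, mulr0).
  have gam_gh : gam (g * h)%g (enum_val i) y
      = gam h (enum_val i) y * gam g (h * enum_val i)%g y / gam g h (act (enum_val i) y).
    by rewrite gam_cocycle mulfK ?qa_gam_neq0.
  by rewrite gam_gh /= mulr1n; field; rewrite !qa_gam_neq0.
Qed.

(* The index [enum_rank 1] is the basis vector e_1 of Ind(y). *)
Lemma double_braid_ind_obj (Y : eqobj K G X) y i k l :
  lcomp (braid M xi Y (ind_obj y)) (braid M xi (ind_obj y) Y) (i, enum_rank (1%g : G)) (k, l)
  = qc (obdeg Y i) y * ((l == enum_rank (d (obdeg Y i)))%:R
      * qc (act (d (obdeg Y i)) y) (obdeg Y i) * obU Y (d (act (d (obdeg Y i)) y)) i k).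
Proof.
rewrite /lcomp (@sum_supp1 _ _ (enum_rank (d (obdeg Y i)), i)).
  rewrite /braid /= !enum_rankK !eqxx mulg1 cm_act1g // qa_gam_norm; last by right; left.
  by rewrite !mul1r divr1 eqxx mulr1.
case=> a b /=; rewrite xpair_eqE negb_and => /orP [a_neq | b_neq].
  rewrite /braid /= enum_rankK mulg1.
  have -> : (enum_val a == d (obdeg Y i)) = false.
    by apply/negbTE; apply: contra_neq a_neq => <-; rewrite enum_valK.
  by rewrite !(mul0r, mulr0).
by rewrite /braid /= (negbTE b_neq) !mul0r.
Qed.

Section TransparentObject.
Variable Y : eqobj K G X.
Hypotheses (Y_valid : valid_obj M xi Y) (Y_transparent : transparent M xi Y).

Lemma transparent_deg_ker i : d (obdeg Y i) = 1%g.
Proof.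
have [E _] := Y_transparent (ind_obj_valid 1%g).
apply/eqP/negPn/negP => d_neq1.
apply: (@valid_obj_row Y (d (act (d (obdeg Y i)) 1%g)) i Y_valid) => k.
have := congr1 (fun f => f (i, enum_rank (1%g : G)) (k, enum_rank (d (obdeg Y i)))) E.
rewrite double_braid_ind_obj eqxx mul1r lid_pair /=.
have -> : (enum_rank (1%g : G) == enum_rank (d (obdeg Y i))) = false.
  by rewrite (inj_eq enum_rank_inj) eq_sym (negbTE d_neq1).
rewrite mulr0 => /eqP; rewrite !mulf_eq0 !(negbTE (qa_c_neq0 _ _)) /=.
by move/eqP.
Qed.

Lemma transparent_u_d i y k :
  qc (obdeg Y i) y * qc y (obdeg Y i) * obU Y (d y) i k = (i == k)%:R.
Proof.
have [E _] := Y_transparent (ind_obj_valid y).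
have := congr1 (fun f => f (i, enum_rank (1%g : G)) (k, enum_rank (1%g : G))) E.
rewrite double_braid_ind_obj transparent_deg_ker cm_act1g // eqxx mul1r lid_pair /=.
by rewrite eqxx mulr1 mulrA.
Qed.

End TransparentObject.

Lemma equivariantization_nondegenerate_suff :
  cm_surjective M -> qa_nondegenerate M xi -> equivariantization_nondegenerate M xi.
Proof.
move=> d_surj c_nondeg Y Y_valid Y_transparent; apply/sum_of_unitsP.
have u1 := valid_obj_u1 Y_valid.
have deg1 i : obdeg Y i = 1%g.
  apply: c_nondeg => [|y dy]; first exact: transparent_deg_ker.
  have := transparent_u_d Y_valid Y_transparent i y i.
  by rewrite dy u1 /lid eqxx mulr1 mulrC.
split=> // g; have [y <-] := d_surj g.
apply: lmap_ext => i k.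
by rewrite /lid -(transparent_u_d Y_valid Y_transparent i y k) deg1 !qa_c_norm ?mul1r; auto.
Qed.

Section PermutationObject.
Variables (T : finType) (a : G -> T -> T).
Hypotheses (a1 : forall t, a 1%g t = t) (aM : forall g h t, a (g * h)%g t = a g (a h t)).

Definition perm_obj : eqobj K G X :=
  @EqObj K G X #|T| (fun _ => 1%g) (fun g i j => (enum_val j == a g (enum_val i))%:R).

Lemma perm_obj_valid : valid_obj M xi perm_obj.
Proof.
split=> /= [g i j _ | g | g h i k]; first by rewrite cm_actg1.
- exists (obU perm_obj g^-1%g).
  split; apply: lmap_ext => i k; rewrite /lcomp /lid /=.
  + rewrite (@sum_enum_supp1 _ _ (a g (enum_val i))) => [|j /negbTE->]; last by rewrite mul0r.
    by rewrite enum_rankK eqxx mul1r -aM mulVg a1 (inj_eq enum_val_inj) eq_sym.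
  + rewrite (@sum_enum_supp1 _ _ (a g^-1 (enum_val i))) => [|j /negbTE->]; last by rewrite mul0r.
    by rewrite enum_rankK eqxx mul1r -aM mulgV a1 (inj_eq enum_val_inj) eq_sym.
- rewrite qa_gam_norm ?mul1r; last by right; right.
  rewrite (@sum_enum_supp1 _ _ (a h (enum_val i))) => [|j /negbTE->]; last by rewrite mul0r.
  by rewrite enum_rankK eqxx mul1r aM.
Qed.

Lemma perm_obj_transparent : (forall y t, a (d y) t = t) -> transparent M xi perm_obj.
Proof.
move=> a_d Z Z_valid.
have braid_lswap : braid M xi perm_obj Z = lswap /\ braid M xi Z perm_obj = lswap.
  split; apply: lmap_ext => p q; rewrite /braid /lswap /=.
    rewrite qa_c_norm; last by left.
    by rewrite cm_d1 // valid_obj_u1 // /lid mulr1 mulrC (eq_sym p.2) -natrM mulnb -xpair_eqE.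
  rewrite qa_c_norm; last by right.
  by rewrite a_d (inj_eq enum_val_inj) mulr1 mulrC -natrM mulnb -xpair_eqE.
by case: braid_lswap => -> ->; split; apply: lswapK.
Qed.

Lemma perm_obj_sum_of_units : is_sum_of_units perm_obj -> forall g t, a g t = t.
Proof.
case/sum_of_unitsP => _ u1 g t.
have := congr1 (fun f => f (enum_rank t) (enum_rank t)) (u1 g).
rewrite /lid /= eqxx enum_rankK; case: eqP => // _ /eqP.
by rewrite eq_sym oner_eq0.
Qed.

End PermutationObject.

Section CharacterObject.
Variable x : X.
Hypotheses (dx : d x = 1%g) (x_rad : forall y, d y = 1%g -> qc y x * qc x y = 1).

Definition monodromy_inv (y : X) : K := (qc x y * qc y x)^-1.

Lemma monodromy_invM y y' :
  monodromy_inv (y * y')%g = gam (d y) (d y') x * monodromy_inv y * monodromy_inv y'.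
Proof.
case: Hxi => [[om_neq0 [_ [_ _]]] [_ [_ [_ [_ [_ [c_mull c_mulr]]]]]]].
have conj_x z : (z * x * z^-1)%g = x by rewrite -(cm_ker_central HM z dx) mulgK.
have conj_by_x z : (x * z * x^-1)%g = z by rewrite (cm_ker_central HM z dx) mulgK.
rewrite /monodromy_inv c_mull c_mulr !conj_x !conj_by_x dx.
case: Hn => _ _ mu1 _; rewrite mu1; last by left.
by rewrite mulr1; field; rewrite !om_neq0 !qa_gam_neq0 !qa_c_neq0.
Qed.

Lemma monodromy_inv_d y y' : d y = d y' -> monodromy_inv y = monodromy_inv y'.
Proof.
move=> dyy'; have d_yy' : d (y^-1 * y')%g = 1%g by rewrite cm_dM // cm_dV // dyy' mulVg.
have minv1 : monodromy_inv (y^-1 * y')%g = 1 by rewrite /monodromy_inv mulrC x_rad // invr1.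
rewrite -[in RHS](mulKVg y y') monodromy_invM d_yy' minv1 qa_gam_norm; last by right; left.
by rewrite mul1r mulr1.
Qed.

(* Off the image of d, [char_lam] takes the junk value 1. *)
Definition char_lam (g : G) : K :=
  if [pick y | d y == g] is Some y then monodromy_inv y else 1.

Lemma char_lam_d y : char_lam (d y) = monodromy_inv y.
Proof.
rewrite /char_lam; case: pickP => [y' /eqP|/(_ y)]; first exact: monodromy_inv_d.
by rewrite eqxx.
Qed.

Definition char_obj : eqobj K G X := @EqObj K G X 1 (fun _ => x) (fun g _ _ => char_lam g).

Lemma char_obj_valid : cm_surjective M -> valid_obj M xi char_obj.
Proof.
move=> d_surj; split=> /= [g i j _ | g | g h i k].
- by have [y <-] := d_surj g; rewrite cm_act_d_ker.
- have lam_neq0 : char_lam g != 0.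
    by have [y <-] := d_surj g; rewrite char_lam_d invr_eq0 mulf_neq0 ?qa_c_neq0.
  exists (fun _ _ => (char_lam g)^-1).
  by split; apply: lmap_ext => i k; rewrite /lcomp /lid big_ord1 !ord1 eqxx ?mulfV ?mulVf.
- have [y <-] := d_surj g; have [y' <-] := d_surj h.
  by rewrite big_ord1 -cm_dM // !char_lam_d monodromy_invM -mulrA (mulrC (monodromy_inv y)).
Qed.

Lemma char_obj_transparent : transparent M xi char_obj.
Proof.
move=> Z Z_valid; have u1 := valid_obj_u1 Z_valid.
split; apply: lmap_ext => p r; rewrite /lcomp (@sum_supp1 _ _ (p.2, p.1)).
- rewrite lid_pair /braid /= dx u1 /lid !eqxx !mul1r char_lam_d /monodromy_inv !ord1 eqxx mul1r.
  by rewrite (eq_sym r.2) /= ?mulr1n; field; rewrite !qa_c_neq0.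
- case=> b j /=; rewrite xpair_eqE /braid /= dx u1 /lid !ord1 eqxx andbT eq_sym => /negbTE ->.
  by rewrite !(mul0r, mulr0).
- rewrite lid_pair /braid /= dx u1 /lid !eqxx !mul1r char_lam_d /monodromy_inv !ord1 eqxx mulr1.
  by rewrite /= ?mulr1n; field; rewrite !qa_c_neq0.
- case=> j b /=; rewrite xpair_eqE /braid /= !ord1 eqxx /= => /negbTE ->.
  by rewrite !(mul0r, mulr0).
Qed.

End CharacterObject.

Lemma equivariantization_nondegenerate_surj :
  equivariantization_nondegenerate M xi -> cm_surjective M.
Proof.
move=> nondeg g; case: (pickP (fun x => d x == g)) => [x /eqP | not_d]; first by exists x.
pose coset_obj := perm_obj (coset_act M).
have coset_obj_valid : valid_obj M xi coset_obj.
  exact: perm_obj_valid (coset_act1 M) (@coset_actM _ _ M).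
have coset_obj_transparent : transparent M xi coset_obj.
  exact: perm_obj_transparent (coset_act_d HM).
have /(_ g (d @: setT)) /eqP :=
  perm_obj_sum_of_units (nondeg _ coset_obj_valid coset_obj_transparent).
by rewrite (negbTE (coset_act_image HM (fun x => negbT (not_d x)))).
Qed.

Lemma equivariantization_nondegenerate_qa :
  equivariantization_nondegenerate M xi -> qa_nondegenerate M xi.
Proof.
move=> nondeg x dx x_rad; have d_surj := equivariantization_nondegenerate_surj nondeg.
have /sum_of_unitsP [deg1 _] :=
  nondeg _ (char_obj_valid dx x_rad d_surj) (char_obj_transparent dx x_rad).
exact: (deg1 ord0).
Qed.

End Equivariantization.

Theorem proposition5p6 (K : closedFieldType) (charK : [pchar K]%R =i pred0)
    (G X : finGroupType) (M : crossed_module G X) (HM : is_crossed_module M)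
    (xi : qa_data K G X) (Hxi : is_qa_cocycle M xi) (Hnorm : qa_normalized xi) :
  equivariantization_nondegenerate M xi <->
  cm_surjective M /\ qa_nondegenerate M xi.
Proof.
split=> [nondeg | [d_surj c_nondeg]]; last exact: equivariantization_nondegenerate_suff.
split; first exact: equivariantization_nondegenerate_surj HM Hnorm nondeg.
exact: equivariantization_nondegenerate_qa HM Hxi Hnorm nondeg.
Qed.
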